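(* Let $L$ be a finite-dimensional completely solvable Lie algebra over any field $F$. Then $\mathrm{nil}(L)\subseteq N(L)$.
   Context: $L$ is completely solvable if $L^2=[L,L]$ is nilpotent. $N(L)$ is the nilradical (largest nilpotent ideal) of $L$. $\langle a,b\rangle$ denotes the Lie subalgebra generated by $a,b$, and $\mathrm{nil}(L)=\{x\in L\mid \langle h,x\rangle \text{ is nilpotent for all } h\in L\}$. *)

From HB Require Import structures.
From mathcomp Require Import all_boot all_order all_algebra.
Set Implicit Arguments. Unset Strict Implicit. Unset Printing Implicit Defensive.
Import GRing.Theory.
Local Open Scope ring_scope.


Record lie_bracket (F : fieldType) (V : vectType F) (br : V -> V -> V) : Prop := {
  lie_linl : forall (a : F) (x y z : V), br (a *: x + y) z = a *: br x z + br y z;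
  lie_linr : forall (a : F) (x y z : V), br z (a *: x + y) = a *: br z x + br z y;
  lie_alt  : forall x : V, br x x = 0;
  lie_jacobi : forall x y z : V, br x (br y z) + br y (br z x) + br z (br x y) = 0
}.

Section LieDefs.
Variables (F : fieldType) (V : vectType F) (br : V -> V -> V).

(* [A, B] = span of all brackets [a, b], a in A, b in B
   (computed on bases, which is equivalent by bilinearity). *)
Definition brs (A B : {vspace V}) : {vspace V} :=
  <<[seq br u v | u <- vbasis A, v <- vbasis B]>>%VS.

Fixpoint lcs (S : {vspace V}) (k : nat) : {vspace V} :=
  if k is k'.+1 then brs S (lcs S k') else S.

Definition lie_nilpotent (S : {vspace V}) : Prop := exists n, lcs S n = 0%VS.

Definition lie_ideal (I : {vspace V}) : Prop := (brs fullv I <= I)%VS.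

Definition completely_solvable : Prop := lie_nilpotent (brs fullv fullv).

(* subalgebra generated by a and b: close span{a,b} under brackets;
   S_0 = span{a,b}, S_{k+1} = S_k + [S_k, S_k]; the chain stabilizes
   after at most dim V steps. *)
Fixpoint gen_iter (a b : V) (k : nat) : {vspace V} :=
  if k is k'.+1 then (gen_iter a b k' + brs (gen_iter a b k') (gen_iter a b k'))%VS
  else <<[:: a; b]>>%VS.

Definition lie_gen (a b : V) : {vspace V} := gen_iter a b (\dim (fullv : {vspace V})).

Definition nil_set (x : V) : Prop := forall h : V, lie_nilpotent (lie_gen h x).

Definition is_nilradical (N : {vspace V}) : Prop :=
  [/\ lie_ideal N, lie_nilpotent N &
      forall I : {vspace V}, lie_ideal I -> lie_nilpotent I -> (I <= N)%VS].

End LieDefs.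

From HB Require Import structures.
From mathcomp Require Import all_boot all_order all_algebra.

(* Since [L, L] is a nilpotent ideal, it lies in N, so N + Fx is an ideal for
   every x. If x is in nil(L) then ad x is nilpotent, say (ad x)^p = 0: indeed
   (ad x)^n h lies in the n-th term of the lower central series of <h, x>.
   An ideal N extended by such an x stays nilpotent, because
   (N + Fx)^(kp+1) <= N^k: bracketing with N raises the N-degree, bracketing
   with x applies ad x, and p applications of ad x vanish. Maximality of the
   nilradical then gives N + Fx <= N. *)

Set Implicit Arguments. Unset Strict Implicit. Unset Printing Implicit Defensive.
Import GRing.Theory.
Local Open Scope ring_scope.

Section LinearFun.
Variables (R : pzRingType) (U W : lmodType R) (f : U -> W).
Hypothesis f_lin : linear f.

Lemma linear_fun0 : f 0 = 0.
Proof.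
by have := f_lin 1 0 0; rewrite !scale1r addr0 => /eqP; rewrite -subr_eq subrr => /eqP <-.
Qed.

Lemma linear_funD u v : f (u + v) = f u + f v.
Proof. by have := f_lin 1 u v; rewrite !scale1r. Qed.

Lemma linear_funZ a u : f (a *: u) = a *: f u.
Proof. by rewrite -[_ *: u]addr0 f_lin linear_fun0 addr0. Qed.

Lemma linear_funN u : f (- u) = - f u.
Proof. by rewrite -scaleN1r linear_funZ scaleN1r. Qed.

End LinearFun.

Lemma linear_iter (R : pzRingType) (U : lmodType R) (f : U -> U) n :
  linear f -> linear (iter n f).
Proof. by move=> f_lin a u v; elim: n => //= n ->; rewrite f_lin. Qed.

Lemma span_ind (K : fieldType) (vT : vectType K) (P : vT -> Prop) (s : seq vT) :
  P 0 -> (forall u v, P u -> P v -> P (u + v)) -> (forall c u, P u -> P (c *: u)) ->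
  (forall v, v \in s -> P v) -> forall w, w \in <<s>>%VS -> P w.
Proof.
move=> P0 PD PZ; elim: s => [|a s IH] Ps w.
  by rewrite span_nil memv0 => /eqP ->.
rewrite span_cons => /memv_addP [u /vlineP [c ->] [v sv ->]].
apply: PD; first by apply/PZ/Ps; rewrite mem_head.
by apply: IH => // z sz; apply: Ps; rewrite inE sz orbT.
Qed.

Section LocallyNilpotent.
Variables (K : fieldType) (vT : vectType K) (f : vT -> vT).
Hypothesis f_lin : linear f.

Lemma iter_eq0_leq m n v : (m <= n)%N -> iter m f v = 0 -> iter n f v = 0.
Proof.
move=> le_mn fm_v; rewrite -(subnK le_mn) iterD fm_v.
exact: linear_fun0 (linear_iter _ f_lin).
Qed.

Lemma locally_nilpotent_iter_eq0 :
  (forall v, exists n, iter n f v = 0) -> exists p, forall v, iter p f v = 0.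
Proof.
move=> f_locnil.
have kill_seq (s : seq vT) : exists p, forall e, e \in s -> iter p f e = 0.
  elim: s => [|e s [p IH]]; first by exists 0%N.
  have [n fn_e] := f_locnil e; exists (maxn p n) => e'; rewrite inE.
  case/predU1P => [-> | /IH]; first exact: iter_eq0_leq (leq_maxr _ _) fn_e.
  exact: iter_eq0_leq (leq_maxl _ _).
have [p fp_basis] := kill_seq (vbasis fullv).
exists p => v; have : v \in <<vbasis fullv>>%VS.
  by rewrite (span_basis (vbasisP _)) memvf.
have fp_lin := linear_iter p f_lin.
apply: (span_ind (P := fun v => iter p f v = 0)) => //.
- exact: linear_fun0 fp_lin.
- by move=> u w fp_u fp_w; rewrite (linear_funD fp_lin) fp_u fp_w addr0.
- by move=> c u fp_u; rewrite (linear_funZ fp_lin) fp_u scaler0.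
Qed.

End LocallyNilpotent.

Section LieBracket.
Variables (F : fieldType) (V : vectType F) (br : V -> V -> V).
Hypothesis hL : lie_bracket br.

Lemma linear_br z : linear (br z).
Proof. by move=> a x y; rewrite (lie_linr hL). Qed.

Lemma linear_br_l z : linear (br^~ z).
Proof. by move=> a x y; rewrite /= (lie_linl hL). Qed.

Lemma br0l z : br 0 z = 0. Proof. exact: linear_fun0 (linear_br_l z). Qed.
Lemma br0r z : br z 0 = 0. Proof. exact: linear_fun0 (linear_br z). Qed.
Lemma brDl x y z : br (x + y) z = br x z + br y z.
Proof. exact: (linear_funD (linear_br_l z) x y). Qed.
Lemma brDr x y z : br z (x + y) = br z x + br z y.
Proof. exact: (linear_funD (linear_br z) x y). Qed.
Lemma brZl c x z : br (c *: x) z = c *: br x z.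
Proof. exact: (linear_funZ (linear_br_l z) c x). Qed.
Lemma brZr c x z : br z (c *: x) = c *: br z x.
Proof. exact: (linear_funZ (linear_br z) c x). Qed.
Lemma brNr x z : br z (- x) = - br z x.
Proof. exact: (linear_funN (linear_br z) x). Qed.

Lemma br_antisym u v : br u v = - br v u.
Proof.
apply/eqP; rewrite -subr_eq0 opprK.
by have := lie_alt hL (u + v); rewrite brDl !brDr !(lie_alt hL) add0r addr0 => ->.
Qed.

Lemma br_leibniz y a b : br y (br a b) = br a (br y b) + br (br y a) b.
Proof.
rewrite [br y b]br_antisym brNr [br (br y a) b]br_antisym -opprD.
apply/eqP; rewrite eq_sym eqr_oppLR -addr_eq0 addrC addrA.
by rewrite (lie_jacobi hL).
Qed.

Lemma brs_ind (P : V -> Prop) (A B : {vspace V}) :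
  P 0 -> (forall u v, P u -> P v -> P (u + v)) -> (forall c u, P u -> P (c *: u)) ->
  (forall a b, a \in A -> b \in B -> P (br a b)) -> forall w, w \in brs br A B -> P w.
Proof.
move=> P0 PD PZ Pab; apply: span_ind => // v /allpairsP [[a b] [aA bB ->]] /=.
by apply: Pab; apply: vbasis_mem.
Qed.

Lemma mem_brs (A B : {vspace V}) a b : a \in A -> b \in B -> br a b \in brs br A B.
Proof.
rewrite -{1}(span_basis (vbasisP A)) -{1}(span_basis (vbasisP B)).
move: a; apply: (span_ind (P := fun a =>
  b \in <<vbasis B>>%VS -> br a b \in brs br A B)).
- by rewrite br0l mem0v.
- by move=> u v Pu Pv bB; rewrite brDl memvD ?Pu ?Pv.
- by move=> c u Pu bB; rewrite brZl memvZ ?Pu.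
move=> a aA; move: b; apply: span_ind.
- by rewrite br0r mem0v.
- by move=> u v Pu Pv; rewrite brDr memvD.
- by move=> c u Pu; rewrite brZr memvZ.
by move=> b bB; apply/memv_span/allpairsP; exists (a, b).
Qed.

Lemma brs_subv (A B C : {vspace V}) :
  (forall a b, a \in A -> b \in B -> br a b \in C) -> (brs br A B <= C)%VS.
Proof.
move=> sABC; apply/subvP; apply: brs_ind => //.
- exact: mem0v.
- by move=> u v; apply: memvD.
- by move=> c u; apply: memvZ.
Qed.

Lemma brsS (A B A' B' : {vspace V}) :
  (A <= A')%VS -> (B <= B')%VS -> (brs br A B <= brs br A' B')%VS.
Proof.
by move=> /subvP sAA' /subvP sBB'; apply: brs_subv => a b /sAA' aA' /sBB'; apply: mem_brs.
Qed.

Lemma lie_ideal_derived_subv (I : {vspace V}) :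
  (brs br fullv fullv <= I)%VS -> lie_ideal br I.
Proof. by apply: subv_trans; apply: brsS (subvv _) (subvf _). Qed.

Lemma lie_ideal_derived : lie_ideal br (brs br fullv fullv).
Proof. exact: lie_ideal_derived_subv (subvv _). Qed.

Lemma lie_ideal_memr (I : {vspace V}) y n : lie_ideal br I -> n \in I -> br y n \in I.
Proof. by move=> /subvP I_ideal nI; apply/I_ideal/mem_brs; rewrite ?memvf. Qed.

Lemma lie_ideal_meml (I : {vspace V}) y n : lie_ideal br I -> n \in I -> br n y \in I.
Proof. by move=> I_ideal nI; rewrite br_antisym memvN lie_ideal_memr. Qed.

Lemma lcs_ideal (I : {vspace V}) k y w :
  lie_ideal br I -> w \in lcs br I k -> br y w \in lcs br I k.
Proof.
move=> I_ideal; elim: k y w => [|k IH] y w /=; first exact: lie_ideal_memr.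
move: w; apply: (brs_ind (P := fun w => br y w \in brs br I (lcs br I k))).
- by rewrite br0r mem0v.
- by move=> u v Pu Pv; rewrite brDr memvD.
- by move=> c u Pu; rewrite brZr memvZ.
move=> a b aI bIk; rewrite br_leibniz memvD //; apply: mem_brs => //.
- exact: IH.
- exact: lie_ideal_memr.
Qed.

Lemma iter_br_lcs (S : {vspace V}) a v n :
  a \in S -> v \in S -> iter n (br a) v \in lcs br S n.
Proof. by move=> aS vS; elim: n => //= n IH; apply: mem_brs. Qed.

Lemma span_sub_lie_gen a b : (<<[:: a; b]>> <= lie_gen br a b)%VS.
Proof.
rewrite /lie_gen; elim: (\dim _) => [|k IH] /=; first exact: subvv.
exact: subv_trans IH (addvSl _ _).
Qed.

Lemma nil_set_ad_nilpotent x : nil_set br x -> exists p, forall v, iter p (br x) v = 0.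
Proof.
move=> x_nil; apply: locally_nilpotent_iter_eq0 (linear_br x) _ => h.
have [n gen_n] := x_nil h.
have /subvP gen_hx := span_sub_lie_gen h x.
have hS : h \in lie_gen br h x by apply/gen_hx/memv_span; rewrite mem_head.
have xS : x \in lie_gen br h x by apply/gen_hx/memv_span; rewrite !inE eqxx orbT.
by exists n; apply/eqP; rewrite -memv0 -gen_n iter_br_lcs.
Qed.

Section AddLine.
Variables (N : {vspace V}) (x : V).
Hypothesis N_ideal : lie_ideal br N.

Let K := (N + <[x]>)%VS.

Lemma brs_addv_line : (brs br K K <= N)%VS.
Proof.
apply: brs_subv => a b /memv_addP [n nN [_ /vlineP [c ->] ->]].
case/memv_addP => [n' n'N [_ /vlineP [c' ->] ->]].
rewrite brDl !brDr !brZl !brZr (lie_alt hL) !scaler0 addr0.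
rewrite !memvD ?memvZ //; [exact: lie_ideal_memr | exact: lie_ideal_meml |].
exact: lie_ideal_memr.
Qed.

Definition lcs_ad_split k j w := exists m v,
  [/\ m \in lcs br N k.+1, v \in lcs br N k & w = m + iter j (br x) v].

Lemma lcs_addv_line_split n k : (lcs br K n <= lcs br N k)%VS ->
  forall j w, w \in lcs br K (j + n) -> lcs_ad_split k j w.
Proof.
move=> /subvP Kn_sub; elim=> [|j IH] w.
  by move=> /Kn_sub wNk; exists 0, w; rewrite mem0v add0r.
have adj_lin i := linear_iter i (linear_br x).
rewrite addSn /=; apply: (brs_ind (P := lcs_ad_split k j.+1)).
- by exists 0, 0; rewrite !mem0v (linear_fun0 (adj_lin _)) addr0.
- move=> _ _ [m [v [mN vN ->]]] [m' [v' [m'N v'N ->]]].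
  by exists (m + m'), (v + v'); rewrite !memvD // (linear_funD (adj_lin _)) addrACA.
- move=> c _ [m [v [mN vN ->]]].
  by exists (c *: m), (c *: v); rewrite !memvZ // (linear_funZ (adj_lin _)) scalerDr.
(* In [n0 + c x, m + (ad x)^j v] every term but c (ad x)^(j+1) v lies in N^(k+1). *)
move=> a b /memv_addP [n0 n0N [_ /vlineP [c ->] ->]] /IH [m [v [mN vN ->]]].
exists (br n0 m + br n0 (iter j (br x) v) + c *: br x m), (c *: v); split.
- have adj_vN : iter j (br x) v \in lcs br N k.
    by elim: j {IH adj_lin} => //= j IHj; apply: lcs_ideal.
  by rewrite !memvD ?memvZ //; [exact: lcs_ideal | exact: mem_brs | exact: lcs_ideal].
- exact: memvZ.
- by rewrite brDl !brDr !brZl /= (linear_funZ (adj_lin _)) brZr !addrA.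
Qed.

Variable p : nat.
Hypothesis ad_x_nil : forall v, iter p (br x) v = 0.

Lemma lcs_addv_line_sub k : (lcs br K (k * p).+1 <= lcs br N k)%VS.
Proof.
elim: k => [|k IH]; first exact: brs_addv_line.
apply/subvP => w; rewrite mulSn -addnS => /(lcs_addv_line_split IH) [m [v [mN _ ->]]].
by rewrite ad_x_nil addr0.
Qed.

Lemma nilpotent_addv_line : lie_nilpotent br N -> lie_nilpotent br K.
Proof.
move=> [r Nr]; exists (r * p).+1; apply/eqP; rewrite -subv0 -Nr.
exact: lcs_addv_line_sub.
Qed.

End AddLine.

End LieBracket.

Theorem lemma3p5 (F : fieldType) (V : vectType F) (br : V -> V -> V)
  (hL : lie_bracket br) (hcs : completely_solvable br)
  (N : {vspace V}) (hN : is_nilradical br N) :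
  forall x : V, nil_set br x -> x \in N.
Proof.
move=> x x_nil; case: hN => N_ideal N_nil N_max.
have L2_sub_N : (brs br fullv fullv <= N)%VS.
  exact: N_max (lie_ideal_derived hL) hcs.
have [p ad_x_nil] := nil_set_ad_nilpotent hL x_nil.
have K_ideal : lie_ideal br (N + <[x]>)%VS.
  exact/(lie_ideal_derived_subv hL)/(subv_trans L2_sub_N)/addvSl.
have /subvP := N_max _ K_ideal (nilpotent_addv_line hL N_ideal ad_x_nil N_nil).
by apply; apply/(subvP (addvSr _ _))/memv_line.
Qed.
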